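(* Let $M$ be a finitely presented $n$-parameter persistence module. For all $j\geq1$, if $\vec s\in\xi_{j+1}(M)$ then there exist $\vec r_i\in\xi_j(M)$ such that $\vec s=\bigvee_i\vec r_i$. Consequently, for each coordinate $k\in\{1,\dots,n\}$ the set of $k$-th coordinates of points of $\bigcup_i\xi_i(M)$ equals the set of $k$-th coordinates of points of $\xi_0(M)\cup\xi_1(M)$; i.e. the multiparameter Betti grid of $M$ is determined by $\xi_0(M)\cup\xi_1(M)$.
   Context: Modules are $\mathbb{R}^n$-graded modules over $P_n$, the monoid ring over a field $\mathbb{F}$ of $([0,\infty)^n,+)$; finitely presented means a quotient of a finitely generated free graded module by a finitely generated homogeneous submodule. Let $I\subset P_n$ be the ideal generated by the monomials $\vec x^{\vec a}$, $\vec a\neq0$. $\xi_i(M)(\vec a)=\dim_{\mathbb F}\mathrm{Tor}_i^{P_n}(M,P_n/I)_{\vec a}$, and $\xi_i(M)$ is identified with its support, i.e. the set of grades of generators of the $i$-th term of a minimal free resolution of $M$. $\vee$ denotes the join (coordinatewise maximum) in $\mathbb{R}^n$. The multiparameter Betti grid of $M$ is the product over coordinates $k$ of the sets of distinct $k$-th coordinates of points of $\bigcup_i\xi_i(M)$. *)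

From HB Require Import structures.
From mathcomp Require Import all_boot all_order all_algebra.
From mathcomp Require Import reals.
Set Implicit Arguments. Unset Strict Implicit. Unset Printing Implicit Defensive.
Import Order.TTheory GRing.Theory Num.Theory.
Local Open Scope ring_scope.

Section Grades.
Variables (R : realType) (n : nat).

Definition leqv (x y : 'rV[R]_n) : bool := [forall k : 'I_n, x 0 k <= y 0 k].

Definition joinv (x y : 'rV[R]_n) : 'rV[R]_n := \row_k Num.max (x 0 k) (y 0 k).

Definition bigjoinv (x0 : 'rV[R]_n) (xs : seq 'rV[R]_n) : 'rV[R]_n :=
  foldr joinv x0 xs.
End Grades.

(* A finitely generated free R^n-graded P_n-module is  (+)_j P_n(-g_j);
   it is described by the finite list of grades g : 'I_m -> R^n of its basis.
   Its component at grade a is the F-vector space of column vectors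
   supported on the basis elements j with g_j <= a, and all structure maps
   are inclusions.  A homogeneous map  (+)_j P_n(-g_j) -> (+)_i P_n(-h_i)
   is a matrix D over F with D i j = coefficient of x^(g_j - h_i), so
   D i j != 0 -> h_i <= g_j; its component at grade a is v |-> D *m v. *)
Section Resolutions.
Variables (F : fieldType) (R : realType) (n : nat).

Definition supported_in (m : nat) (g : 'I_m -> 'rV[R]_n) (a : 'rV[R]_n)
  (v : 'cV[F]_m) : Prop :=
  forall j : 'I_m, ~~ leqv (g j) a -> v j 0 = 0.

(* A minimal free resolution  ... -> F_2 -d_2-> F_1 -d_1-> F_0  (-> M -> 0),
   where F_i has rank r i and basis grades g i, and
   d i : 'M_(r i, r i.+1) is the differential F_{i+1} -> F_i.
   The resolved module is M = coker (d 0). *)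
Definition is_minimal_free_resolution (r : nat -> nat)
  (g : forall i, 'I_(r i) -> 'rV[R]_n)
  (d : forall i, 'M[F]_(r i, r i.+1)) : Prop :=
  (forall i (p : 'I_(r i)) (q : 'I_(r i.+1)),
      d i p q != 0 -> leqv (g i p) (g i.+1 q)) /\
  (forall i (a : 'rV[R]_n) (v : 'cV[F]_(r i.+1)),
      supported_in (g i.+1) a v ->
      (d i *m v = 0 <->
       exists w : 'cV[F]_(r i.+2), supported_in (g i.+2) a w /\ d i.+1 *m w = v)) /\
  (* minimality: im d_{i+1} is contained in I F_i, i.e. no nonzero entry
     is a constant (degree-0) monomial *)
  (forall i (p : 'I_(r i)) (q : 'I_(r i.+1)),
      d i p q != 0 -> g i p != g i.+1 q).

Definition xi (r : nat -> nat) (g : forall i, 'I_(r i) -> 'rV[R]_n) (i : nat)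
  (s : 'rV[R]_n) : Prop := exists p : 'I_(r i), g i p = s.
End Resolutions.

(* Let e_q be a basis element of F_(j+1) of grade s, and let u be the join of the
   grades of the basis elements of F_j occurring in its boundary c = d e_q.  By
   homogeneity u <= s.  Since d c = 0 and c lives in grade u, exactness at F_j
   gives w of grade u with d w = c.  If u < s, the q-th coordinate of w vanishes,
   so e_q - w is a cycle of grade s whose q-th coordinate is 1; by exactness it is
   a boundary of grade s, and minimality forces its q-th coordinate to be 0.
   Hence s = u.  The statement on coordinates follows by induction on j, since
   every coordinate of a join is a coordinate of one of its arguments. *)
From HB Require Import structures.
From mathcomp Require Import all_boot all_order all_algebra.
From mathcomp Require Import reals.
Set Implicit Arguments. Unset Strict Implicit. Unset Printing Implicit Defensive.
Import Order.TTheory GRing.Theory Num.Theory.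
Local Open Scope ring_scope.

Section Join.
Variables (R : realType) (n : nat).
Implicit Types (x y z s : 'rV[R]_n) (xs : seq 'rV[R]_n).

Lemma leqv_refl x : leqv x x.
Proof. exact/forallP. Qed.

Lemma leqv_trans y x z : leqv x y -> leqv y z -> leqv x z.
Proof. by move=> /forallP xy /forallP yz; apply/forallP => k; apply: le_trans (xy k) (yz k). Qed.

Lemma leqv_anti x y : leqv x y -> leqv y x -> x = y.
Proof. by move=> /forallP xy /forallP yx; apply/rowP => k; apply/le_anti; rewrite xy yx. Qed.

Lemma joinv_leqv x y s : leqv (joinv x y) s = leqv x s && leqv y s.
Proof.
apply/forallP/andP => [le_xy_s | [/forallP le_x /forallP le_y]] /=.
  by split; apply/forallP => k; have := le_xy_s k; rewrite mxE ge_max => /andP[].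
by move=> k; rewrite mxE ge_max le_x le_y.
Qed.

Lemma bigjoinv_leqv x0 xs s :
  leqv (bigjoinv x0 xs) s = leqv x0 s && all (fun x => leqv x s) xs.
Proof. by elim: xs => [|y xs IH] /=; rewrite ?andbT // joinv_leqv IH andbCA. Qed.

Lemma mem_leqv_bigjoinv x0 xs x : x \in x0 :: xs -> leqv x (bigjoinv x0 xs).
Proof.
move=> x_in; have := leqv_refl (bigjoinv x0 xs).
rewrite bigjoinv_leqv => /andP[le_x0 /allP le_xs].
by move: x_in; rewrite inE => /predU1P[->|/le_xs].
Qed.

Lemma bigjoinv_coord x0 xs k :
  exists2 x, x \in x0 :: xs & bigjoinv x0 xs 0 k = x 0 k.
Proof.
elim: xs => [|y xs [x x_in IH]] /=; first by exists x0; rewrite ?mem_head.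
rewrite mxE IH maxEle; case: ifP => _; last by exists y; rewrite ?inE ?eqxx ?orbT.
by exists x; rewrite // !inE orbCA -[_ || (x \in xs)]in_cons x_in orbT.
Qed.

End Join.

Section Support.
Context {F : fieldType} {R : realType} {n : nat}.

Lemma supported_in_leqv m (g : 'I_m -> 'rV[R]_n) a b (v : 'cV[F]_m) :
  leqv a b -> supported_in g a v -> supported_in g b v.
Proof.
move=> le_ab supp_v j /negP not_le_b; apply: supp_v; apply/negP => le_a.
exact/not_le_b/(leqv_trans le_a).
Qed.

Lemma supported_in_delta m (g : 'I_m -> 'rV[R]_n) q :
  supported_in g (g q) (delta_mx q 0 : 'cV[F]_m).
Proof. by move=> j; rewrite mxE; case: eqVneq => [->|//]; rewrite leqv_refl. Qed.

Lemma supported_in_col m1 m2 (h : 'I_m1 -> 'rV[R]_n) a (A : 'M[F]_(m1, m2)) q :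
  (forall p, A p q != 0 -> leqv (h p) a) -> supported_in h a (col q A).
Proof. by move=> le_a p; rewrite mxE; apply: contraNeq => /le_a. Qed.

Lemma supported_in_mulmx m1 m2 (h : 'I_m1 -> 'rV[R]_n) (g : 'I_m2 -> 'rV[R]_n)
    (A : 'M[F]_(m1, m2)) a (w : 'cV[F]_m2) :
  (forall p q, A p q != 0 -> leqv (h p) (g q)) ->
  supported_in g a w -> supported_in h a (A *m w).
Proof.
move=> homA supp_w p not_le_p; rewrite mxE; apply: big1 => q _.
have [-> | /homA le_pq] := eqVneq (A p q) 0; first by rewrite mul0r.
rewrite supp_w ?mulr0 //; apply: contra not_le_p; exact: leqv_trans.
Qed.

End Support.

Section MinimalResolution.
Variables (F : fieldType) (R : realType) (n : nat) (r : nat -> nat).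
Variables (g : forall i, 'I_(r i) -> 'rV[R]_n) (d : forall i, 'M[F]_(r i, r i.+1)).
Arguments g : clear implicits.
Hypothesis res : is_minimal_free_resolution g d.

Lemma d_homogeneous i p q : d i p q != 0 -> leqv (g i p) (g i.+1 q).
Proof. by case: res => hom _; apply: hom. Qed.

Lemma d_minimal i p q : d i p q != 0 -> g i p != g i.+1 q.
Proof. by case: res => _ [_ min]; apply: min. Qed.

Lemma d_exact i a v : supported_in (g i.+1) a v -> d i *m v = 0 ->
  exists2 w, supported_in (g i.+2) a w & d i.+1 *m w = v.
Proof. by case: res => _ [exactness _] /exactness-> [w []]; exists w. Qed.

Lemma mulmx_dd i a w : supported_in (g i.+2) a w -> d i *m (d i.+1 *m w) = 0.
Proof.
case: res => _ [exactness _] supp_w.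
have supp_dw := supported_in_mulmx (@d_homogeneous i.+1) supp_w.
by apply/(exactness _ _ _ supp_dw); exists w.
Qed.

(* A boundary of grade at most g q has no component along the basis vector q:
   a nonzero entry d p q with g p <= g q would be a unit, against minimality. *)
Lemma boundary_coord_eq0 i q a z :
  supported_in (g i.+2) a z -> leqv a (g i.+1 q) -> (d i.+1 *m z) q 0 = 0.
Proof.
move=> supp_z le_a; rewrite mxE; apply: big1 => p _.
have [-> | dqp] := eqVneq (d i.+1 q p) 0; first by rewrite mul0r.
case le_p: (leqv (g i.+2 p) a); last by rewrite supp_z ?le_p ?mulr0.
have gqp := leqv_anti (d_homogeneous dqp) (leqv_trans le_p le_a).
by have := d_minimal dqp; rewrite gqp eqxx.
Qed.

Lemma cycle_coord_eq0 i q v :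
  supported_in (g i.+2) (g i.+2 q) v -> d i.+1 *m v = 0 -> v q 0 = 0.
Proof.
move=> supp_v /(d_exact supp_v)[z supp_z <-].
exact: boundary_coord_eq0 supp_z (leqv_refl _).
Qed.

Lemma exists_boundary_coord i q : exists p, d i.+1 p q != 0.
Proof.
apply/existsP; apply: contraT; rewrite negb_exists => /forallP col0.
have dq0 : d i.+1 *m (delta_mx q 0 : 'cV_(r i.+2)) = 0.
  by rewrite -colE; apply/matrixP => p j; rewrite !mxE; apply/eqP/negPn/col0.
have := cycle_coord_eq0 (supported_in_delta (q := q)) dq0.
by rewrite mxE !eqxx => /eqP; rewrite oner_eq0.
Qed.

Lemma grade_eq_bigjoinv_boundary i q p0 : d i.+1 p0 q != 0 ->
  g i.+2 q = bigjoinv (g i.+1 p0) [seq g i.+1 p | p <- enum 'I_(r i.+1) & d i.+1 p q != 0].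
Proof.
move=> dp0q; set s := g i.+2 q; set u := bigjoinv _ _.
have le_us : leqv u s.
  rewrite bigjoinv_leqv d_homogeneous //=; apply/allP => x /mapP[p].
  by rewrite mem_filter => /andP[/d_homogeneous le_ps _] ->.
have supp_col : supported_in (g i.+1) u (col q (d i.+1)).
  apply: supported_in_col => p dpq; apply: mem_leqv_bigjoinv.
  by rewrite inE map_f ?orbT // mem_filter dpq mem_enum.
have dcol : d i *m col q (d i.+1) = 0.
  by rewrite colE; apply: mulmx_dd (supported_in_delta (q := q)).
have [w supp_w dw] := d_exact supp_col dcol.
apply: leqv_anti => //; apply: contraT => not_le_su.
have wq0 : w q 0 = 0 by apply: supp_w.
have supp_ew : supported_in (g i.+2) s (delta_mx q 0 - w).
  move=> j not_le_js; rewrite !mxE (supported_in_leqv le_us supp_w) // subr0.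
  by case: eqVneq not_le_js => // ->; rewrite leqv_refl.
have dew : d i.+1 *m (delta_mx q 0 - w) = 0 by rewrite mulmxBr dw colE subrr.
have := cycle_coord_eq0 supp_ew dew.
by rewrite !mxE wq0 !eqxx subr0 => /eqP; rewrite oner_eq0.
Qed.

Lemma xi_succ_bigjoinv i s : xi g i.+2 s ->
  exists r0 rs, [/\ xi g i.+1 r0, forall x, x \in rs -> xi g i.+1 x & s = bigjoinv r0 rs].
Proof.
case=> q <-; have [p0 dp0q] := exists_boundary_coord q.
exists (g i.+1 p0), [seq g i.+1 p | p <- enum 'I_(r i.+1) & d i.+1 p q != 0].
split; [by exists p0 | by move=> _ /mapP[p _ ->]; exists p |].
exact: grade_eq_bigjoinv_boundary.
Qed.

Lemma xi_coord_xi01 j s k : xi g j s ->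
  exists2 s', xi g 0 s' \/ xi g 1 s' & s' 0 k = s 0 k.
Proof.
elim: j s => [|[|j] IH] s xi_s; [by exists s; first left | by exists s; first right |].
have [r0 [rs [xi_r0 xi_rs ->]]] := xi_succ_bigjoinv xi_s.
have [x x_in ->] := bigjoinv_coord r0 rs k.
by apply: IH; move: x_in; rewrite inE => /predU1P[-> | /xi_rs].
Qed.

End MinimalResolution.

Theorem mainTheorem4 (F : fieldType) (R : realType) (n : nat)
  (r : nat -> nat) (g : forall i, 'I_(r i) -> 'rV[R]_n)
  (d : forall i, 'M[F]_(r i, r i.+1)) :
  is_minimal_free_resolution g d ->
  (forall (j : nat) (s : 'rV[R]_n), (1 <= j)%N -> xi g j.+1 s ->
     exists (r0 : 'rV[R]_n) (rs : seq 'rV[R]_n),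
       xi g j r0 /\ (forall x, x \in rs -> xi g j x) /\ s = bigjoinv r0 rs) /\
  (forall (k : 'I_n) (x : R),
     (exists (i : nat) (s : 'rV[R]_n), xi g i s /\ s 0 k = x) <->
     (exists s : 'rV[R]_n, (xi g 0 s \/ xi g 1 s) /\ s 0 k = x)).
Proof.
move=> res; split=> [[|j] s // _ /(xi_succ_bigjoinv res)[r0 [rs [? ? ?]]] | k x].
  by exists r0, rs.
split=> [[i [s [xi_s <-]]] | [s [[xi_s | xi_s] <-]]].
- by have [s' ? ?] := xi_coord_xi01 res k xi_s; exists s'.
- by exists 0%N, s.
- by exists 1%N, s.
Qed.
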